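(* Let $u\le v$ in $S_n$, let $I$ be a strong hypercube decomposition of $[u,v]$ with hypercube maps $\theta_x$, and let $\prec$ be a reflection order. Then for each $x\in I$ and each antichain $Y\in\mathcal{A}_x$ there exists a unique ordering $Y=\{y_1,\dots,y_k\}$ such that $$x\to\theta_x(\{y_1\})\to\theta_x(\{y_1,y_2\})\to\cdots\to\theta_x(\{y_1,\dots,y_k\})$$ is an increasing path (edge labels strictly increasing under $\prec$) from $x$ to $\theta_x(Y)$ in the Bruhat graph.
   Context: $S_n$ is the symmetric group with simple reflections $s_i=(i\ i{+}1)$, length $\ell$, and $T$ the set of transpositions. The Bruhat graph $\Gamma$ has vertex set $S_n$ and edges $w\xrightarrow{t}tw$ labelled $t$ whenever $t\in T$, $\ell(w)<\ell(tw)$; Bruhat order is reachability; $\Gamma(u,v)$ is the induced subgraph on $[u,v]$. A diamond is a subgraph of $\Gamma$ with four distinct vertices $x_1,\dots,x_4$ and edges $x_1\to x_2\to x_4$, $x_1\to x_3\to x_4$; $X\subset[u,v]$ is diamond-closed in $[u,v]$ if it contains the fourth vertex of any diamond in $[u,v]$ of which it contains three vertices. A reflection order is a total order $\prec$ on $T$ with, for all $a<b<c$, either $(a\,b)\prec(a\,c)\prec(b\,c)$ or $(b\,c)\prec(a\,c)\prec(a\,b)$. For an order ideal $I\subset[u,v]$ and $x\in I$, $\mathcal{Y}_x=\{y\in[u,v]\setminus I: x\to y\}$ and $\mathcal{A}_x$ is the set of Bruhat antichains contained in $\mathcal{Y}_x$, with $Y_1\to Y_2$ iff $Y_1\subset Y_2$,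 $|Y_2\setminus Y_1|=1$. A strong hypercube cluster at $x$ is a map $\theta_x:\mathcal{A}_x\to[u,v]$ with (HC1) $\theta_x(\varnothing)=x$; (HC2) $\theta_x(\{y\})=y$; (HC3) $Y_1\to Y_2$ implies $\theta_x(Y_1)\to\theta_x(Y_2)$ in $\Gamma$; (HC4) if $|Y|=|Y'|=|Y\cap Y'|+1$ and $\theta_x(Y\cap Y'),\theta_x(Y),\theta_x(Y'),w$ form a diamond in $\Gamma(u,v)$ with top $w$, then $Y\cup Y'$ is an antichain and $\theta_x(Y\cup Y')=w$. A strong hypercube decomposition of $[u,v]$ is an order ideal $I=[u,z]$ ($z\in[u,v]$) that is diamond-closed in $[u,v]$ and such that every $x\in I$ has a strong hypercube cluster $\theta_x$ relative to $I$. *)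

From mathcomp Require Import all_boot all_fingroup.
Set Implicit Arguments. Unset Strict Implicit. Unset Printing Implicit Defensive.
Local Open Scope group_scope.

Section Bruhat.
Variable n : nat.
Local Notation Sn := {perm 'I_n}.

(* Permutations are viewed as functions 'I_n -> 'I_n.  In MathComp,
   (w * t) x = t (w x), so the composite t o w ("tw") is (w * t)%g. *)
Definition lmul (t w : Sn) : Sn := (w * t)%g.

Definition ell (w : Sn) : nat :=
  #|[set p : 'I_n * 'I_n | (p.1 < p.2)%N && (w p.2 < w p.1)%N]|.

Definition refls : {set Sn} :=
  [set t | [exists a : 'I_n, exists b : 'I_n, (a < b)%N && (t == tperm a b)]].

Definition bedge : rel Sn :=
  fun w x => [exists t in refls, (x == lmul t w) && (ell w < ell x)%N].

(* label of an edge w -> x: the unique t with x = t w *)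
Definition label (w x : Sn) : Sn := (w^-1 * x)%g.

Definition bruhat_le (u v : Sn) : bool := connect bedge u v.

Definition interval (u v : Sn) : {set Sn} :=
  [set x | bruhat_le u x && bruhat_le x v].

Definition antichain (Y : {set Sn}) : Prop :=
  forall y y', y \in Y -> y' \in Y -> y != y' -> ~~ bruhat_le y y'.

Definition diamond (u v x1 x2 x3 x4 : Sn) : Prop :=
  [/\ uniq [:: x1; x2; x3; x4],
      [/\ x1 \in interval u v, x2 \in interval u v,
          x3 \in interval u v & x4 \in interval u v],
      bedge x1 x2 /\ bedge x2 x4 & bedge x1 x3 /\ bedge x3 x4].

Definition diamond_closed (u v : Sn) (X : {set Sn}) : Prop :=
  X \subset interval u v /\
  forall x1 x2 x3 x4, diamond u v x1 x2 x3 x4 ->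
    (3 <= #|X :&: [set x1; x2; x3; x4]|)%N -> [set x1; x2; x3; x4] \subset X.

Definition Yset (u v : Sn) (I : {set Sn}) (x : Sn) : {set Sn} :=
  [set y in interval u v :\: I | bedge x y].

Definition in_Ax (u v : Sn) (I : {set Sn}) (x : Sn) (Y : {set Sn}) : Prop :=
  Y \subset Yset u v I x /\ antichain Y.

(* strong hypercube cluster at x (theta is only relevant on A_x) *)
Definition strong_cluster (u v : Sn) (I : {set Sn}) (x : Sn)
    (theta : {set Sn} -> Sn) : Prop :=
  [/\ (forall Y, in_Ax u v I x Y -> theta Y \in interval u v),
      theta set0 = x,
      (forall y, y \in Yset u v I x -> theta [set y] = y),
      (forall Y1 Y2, in_Ax u v I x Y1 -> in_Ax u v I x Y2 ->
                   Y1 \subset Y2 -> #|Y2 :\: Y1| = 1%N ->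
                   bedge (theta Y1) (theta Y2)) &
      (forall Y Y' w, in_Ax u v I x Y -> in_Ax u v I x Y' ->
                   #|Y| = #|Y'| -> #|Y| = #|Y :&: Y'|.+1%N ->
                   diamond u v (theta (Y :&: Y')) (theta Y) (theta Y') w ->
                   antichain (Y :|: Y') /\ theta (Y :|: Y') = w)].

Definition strong_hc_decomposition (u v z : Sn)
    (theta : Sn -> {set Sn} -> Sn) : Prop :=
  [/\ z \in interval u v,
      diamond_closed u v (interval u z) &
      forall x, x \in interval u z -> strong_cluster u v (interval u z) x (theta x)].

Definition reflection_order (prec : rel Sn) : Prop :=
  [/\ (forall t, t \in refls -> ~~ prec t t),
      (forall t1 t2 t3, t1 \in refls -> t2 \in refls -> t3 \in refls ->
         prec t1 t2 -> prec t2 t3 -> prec t1 t3),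
      (forall t1 t2, t1 \in refls -> t2 \in refls -> t1 != t2 ->
         prec t1 t2 || prec t2 t1) &
      (forall a b c : 'I_n, (a < b)%N -> (b < c)%N ->
         (prec (tperm a b) (tperm a c) && prec (tperm a c) (tperm b c)) ||
         (prec (tperm b c) (tperm a c) && prec (tperm a c) (tperm a b)))].

Definition increasing_path (prec : rel Sn) (p0 : Sn) (ps : seq Sn) : Prop :=
  path bedge p0 ps /\ sorted prec (pairmap label p0 ps).

Definition theta_chain (theta : {set Sn} -> Sn) (s : seq Sn) : seq Sn :=
  [seq theta [set x in take i s] | i <- iota 1 (size s)].

Definition good_ordering (prec : rel Sn) (theta : {set Sn} -> Sn)
    (Y : {set Sn}) (s : seq Sn) : Prop :=
  [/\ uniq s, [set x in s] = Y &
      increasing_path prec (theta set0) (theta_chain theta s)].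

End Bruhat.

(* For S a subset of Y, the vertices theta(S) form a cube in the Bruhat graph: HC3 gives
   the edges theta(S) -> theta(S + y) and HC2 separates the atoms.  The local fact behind
   everything is about diamonds a -> b -> d, a -> c -> d of S_n with b <> c.  Writing
   b = a t1, d = a t1 t2 = a t3 t4 with transpositions t_i, either t3 = t2 and t4 = t1
   (disjoint supports), or all t_i live on three letters x < y < z; in both cases the
   reflection order axiom shows that exactly one of the two paths is increasing, namely
   the one with the smaller first label.  Hence no two-step interval has three middle
   vertices, which forces theta to separate the atoms above every theta(S), so every face
   of the cube is such a diamond.  An increasing ordering of Y \ S must therefore start
   with the y minimising the label of theta(S) -> theta(S + y), and induction on
   |Y \ S| gives existence and uniqueness. *)

From mathcomp Require Import all_boot all_fingroup zify.
Set Implicit Arguments. Unset Strict Implicit. Unset Printing Implicit Defensive.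
Local Open Scope group_scope.

Section BruhatEdges.
Variable n : nat.
Local Notation Sn := {perm 'I_n}.
Implicit Types (w x : Sn) (i j k l p q : 'I_n).

Lemma tperm_conj_mul w i j : w * tperm (w i) (w j) = tperm i j * w.
Proof. by rewrite [RHS]conjgC tpermJ. Qed.

Lemma ell_tperm_mul_le w i j : (i < j)%N -> (w i < w j)%N ->
  (ell w <= ell (tperm i j * w))%N.
Proof.
move=> lt_ij lt_wij; set tau := tperm i j.
pose out k := (k != i) && (k != j).
pose between k := (w i < w k < w j)%N.
pose cross k l := if out k then ~~ out l && between k else out l && between l.
(* [phi] swaps the endpoint of a pair lying in {i, j} exactly when the other endpoint has
   its value strictly between [w i] and [w j]; it is an involution mapping inversions of
   [w] to inversions of [tau * w]. *)
pose phi (kl : 'I_n * 'I_n) := if cross kl.1 kl.2 then (tau kl.1, tau kl.2) else kl.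
have tauE k : k != i -> k != j -> tau k = k by move=> ki kj; rewrite tpermD // eq_sym.
have tau_out k : out k -> tau k = k by case/andP; apply: tauE.
have out_tau k : out (tau k) = out k.
  by rewrite /out /tau; case: tpermP => [->|->|//]; rewrite ?eqxx ?andbF.
have cross_tau k l : cross (tau k) (tau l) = cross k l.
  rewrite /cross !out_tau.
  by case ok: (out k); case ol: (out l); rewrite //= ?tau_out.
have phiK : involutive phi.
  have phiE k l : phi (k, l) = if cross k l then (tau k, tau l) else (k, l) by [].
  by case=> k l; rewrite phiE; case: ifP => c; rewrite phiE ?cross_tau c ?tpermK.
have wneq (a b : 'I_n) : a != b -> (w a : nat) != w b.
  by move=> ab; rewrite val_eqE (inj_eq perm_inj).
rewrite /ell -(card_imset _ (inv_inj phiK)); apply: subset_leq_card.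
apply/subsetP => _ /imsetP[[k l] + ->]; rewrite !inE /= /phi /= !permM.
have ji : j != i by rewrite neq_ltn lt_ij orbT.
have ij : i != j by rewrite eq_sym.
rewrite /cross /out /between.
(case: (eqVneq k i) => [->|ki]; [|case: (eqVneq k j) => [->|kj];
  [|have := wneq _ _ ki; have := wneq _ _ kj]]);
(case: (eqVneq l i) => [->|li]; [|case: (eqVneq l j) => [->|lj];
  [|have := wneq _ _ li; have := wneq _ _ lj]]);
rewrite ?eqxx ?ij ?ji ?ki ?kj ?li ?lj /=; try case: ifP => /=;
rewrite ?tpermK ?(tauE _ ki kj) ?(tauE _ li lj) /tau ?tpermL ?tpermR; lia.
Qed.

Lemma bedge_ell w x : bedge w x -> (ell w < ell x)%N.
Proof. by case/existsP => t /andP[_ /andP[_]]. Qed.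

Lemma bedgeP w x : bedge w x ->
  exists p q, [/\ (p < q)%N, x = w * tperm p q & (w^-1 p < w^-1 q)%N].
Proof.
case/existsP => t /andP[+ /andP[/eqP-> lt_ell]].
rewrite inE => /existsP[p /existsP[q /andP[lt_pq /eqP tE]]].
rewrite /lmul tE in lt_ell *; exists p, q; split=> //.
set i := w^-1 p; set j := w^-1 q.
have [//|lt_ji|/val_inj/perm_inj eq_pq] := ltngtP i j; last first.
  by move: lt_pq; rewrite eq_pq ltnn.
have wxE : w * tperm p q = tperm i j * w by rewrite -tperm_conj_mul !permKV.
have := @ell_tperm_mul_le (w * tperm p q) j i lt_ji.
rewrite wxE !permM tpermL tpermR !permKV [tperm j i]tpermC mulgA tperm2 mul1g.
by move=> /(_ lt_pq); rewrite -wxE leqNgt lt_ell.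
Qed.

Lemma invM_tperm w p q v : (w * tperm p q)^-1 v = w^-1 (tperm p q v).
Proof. by rewrite invMg permM tpermV. Qed.

Lemma label_mul w x : label w (w * x) = x.
Proof. by rewrite /label mulKg. Qed.

Lemma tperm_refls p q : (p < q)%N -> tperm p q \in refls n.
Proof.
by move=> lt_pq; rewrite inE; apply/existsP; exists p; apply/existsP; exists q; rewrite lt_pq eqxx.
Qed.

Lemma label_bedge_refls w x : bedge w x -> label w x \in refls n.
Proof. by case/bedgeP => p [q [lt_pq -> _]]; rewrite label_mul tperm_refls. Qed.

End BruhatEdges.

Section TranspositionProducts.
Variable T : finType.
Implicit Types (a b c d p q v : T).

Lemma tperm_moved_eq a b c d : a != b -> tperm c d b = a -> tperm c d = tperm a b.
Proof.
move=> ab; case: tpermP => [-> <-|-> <-|_ _ eq_ba]; rewrite 1?tpermC //.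
by move: ab; rewrite eq_ba eqxx.
Qed.

Lemma tperm_mul_moved p q p' q' v :
  p != q -> p' != q' -> tperm p q != tperm p' q' -> v \in [:: p; q; p'; q'] ->
  (tperm p q * tperm p' q') v != v.
Proof.
move=> pq pq' ne; rewrite permM; rewrite eq_sym in ne.
have qp : q != p by rewrite eq_sym.
case: (tpermP p q v) => [->|->|vp vq].
- by move=> _; apply: contra ne => /eqP/(tperm_moved_eq pq)->.
- by move=> _; apply: contra ne => /eqP/(tperm_moved_eq qp)->; rewrite tpermC.
by rewrite !inE => /or4P[] /eqP vE //; rewrite {1}vE ?tpermL ?tpermR vE // eq_sym.
Qed.

Lemma tperm_mul_involutive p q p' q' :
  p != q -> p' != q' -> tperm p q != tperm p' q' ->
  involutive (tperm p q * tperm p' q') -> (tperm p q * tperm p' q') p = q.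
Proof.
set s := _ * _ => pq pq' ne invol_s.
have sp : s p != p by apply: tperm_mul_moved; rewrite ?inE ?eqxx.
have sE : s p = tperm p' q' q by rewrite permM tpermL.
have [tq|rq] := eqVneq (tperm p' q' q) q; first by rewrite sE tq.
have rp : tperm p' q' q != p by rewrite -sE.
have t'E := tperm_moved_eq rq (erefl _).
have := invol_s p; rewrite sE {1}/s permM; set r := tperm p' q' q in rq rp t'E *.
rewrite (@tpermD _ p q r) 1?eq_sym // t'E tpermL => qp.
by rewrite qp eqxx in pq.
Qed.

Section Product.
Variables p1 q1 p2 q2 p3 q3 p4 q4 : T.
Hypotheses (pq3 : p3 != q3) (pq4 : p4 != q4)
  (ne12 : tperm p1 q1 != tperm p2 q2)
  (eq_mul : tperm p1 q1 * tperm p2 q2 = tperm p3 q3 * tperm p4 q4).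

Lemma tperm_mul_neq : tperm p3 q3 != tperm p4 q4.
Proof.
apply: contra ne12 => /eqP eq34; apply/eqP/(mulIg (tperm p2 q2)).
by rewrite tperm2 eq_mul eq34 tperm2.
Qed.

Lemma tperm_mul_supp : {subset [:: p3; q3; p4; q4] <= [:: p1; q1; p2; q2]}.
Proof.
move=> v v34; apply/negPn/negP; rewrite !inE !negb_or => /and4P[].
rewrite ![v == _]eq_sym => vp1 vq1 vp2 vq2.
have := tperm_mul_moved pq3 pq4 tperm_mul_neq v34.
by rewrite -eq_mul permM !tpermD ?eqxx.
Qed.

Lemma tperm_mul_disjoint : p1 != q1 -> p2 != q2 ->
  ~~ [|| p1 == p2, p1 == q2, q1 == p2 | q1 == q2] -> tperm p1 q1 != tperm p3 q3 ->
  tperm p3 q3 = tperm p2 q2 /\ tperm p4 q4 = tperm p1 q1.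
Proof.
rewrite !negb_or => pq1 pq2 /and4P[p12 p1q2 q1p2 q12] ne13.
have [p21 q2p1 p2q1 q21] : [/\ p2 != p1, q2 != p1, p2 != q1 & q2 != q1].
  by split; rewrite eq_sym.
have comm : tperm p1 q1 * tperm p2 q2 = tperm p2 q2 * tperm p1 q1.
  by rewrite [LHS]conjgC tpermJ !tpermD.
have invol : involutive (tperm p3 q3 * tperm p4 q4).
  by move=> v; rewrite -permM -eq_mul {2}comm -mulgA tpermKg tperm2 perm1.
have t32 : tperm p3 q3 = tperm p2 q2.
  move: ne13; have := tperm_mul_involutive pq3 pq4 tperm_mul_neq invol.
  have := @tperm_mul_supp p3; rewrite -eq_mul permM !inE eqxx => /(_ isT).
  case/or4P=> /eqP->.
  - by rewrite tpermL tpermD // => <-; rewrite eqxx.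
  - by rewrite tpermR tpermD // => <-; rewrite tpermC eqxx.
  - by rewrite (@tpermD _ p1 q1) // tpermL => <-.
  - by rewrite (@tpermD _ p1 q1) // tpermR => <- _; rewrite tpermC.
by split=> //; apply: (mulgI (tperm p2 q2)); rewrite -t32 -eq_mul t32 comm.
Qed.

End Product.
End TranspositionProducts.

Section ThreeLetters.
Variable n : nat.
Local Notation Sn := {perm 'I_n}.
Implicit Types (p q x y z : 'I_n).

Lemma tperm_overlap_triple p1 q1 p2 q2 : (p1 < q1)%N -> (p2 < q2)%N ->
  tperm p1 q1 != tperm p2 q2 -> [|| p1 == p2, p1 == q2, q1 == p2 | q1 == q2] ->
  exists x y z, [/\ (x < y)%N, (y < z)%N & all (mem [:: x; y; z]) [:: p1; q1; p2; q2]].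
Proof.
move=> lt1 lt2 ne /or4P[] /eqP eq_pq; rewrite -{}eq_pq in lt2 ne *.
- have [lt|lt|/val_inj eq_q] := ltngtP q1 q2; last by rewrite eq_q eqxx in ne.
  + by exists p1, q1, q2; rewrite /= !inE !eqxx !orbT.
  + by exists p1, q2, q1; rewrite /= !inE !eqxx !orbT.
- by exists p2, p1, q1; rewrite /= !inE !eqxx !orbT.
- by exists p1, q1, q2; rewrite /= !inE !eqxx !orbT.
- have [lt|lt|/val_inj eq_p] := ltngtP p1 p2; last by rewrite eq_p eqxx in ne.
  + by exists p1, p2, q1; rewrite /= !inE !eqxx !orbT.
  + by exists p2, p1, q1; rewrite /= !inE !eqxx !orbT.
Qed.

Lemma tperm_mul_cases p1 q1 p2 q2 p3 q3 p4 q4 :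
  (p1 < q1)%N -> (p2 < q2)%N -> (p3 < q3)%N -> (p4 < q4)%N ->
  tperm p1 q1 != tperm p2 q2 -> tperm p1 q1 != tperm p3 q3 ->
  tperm p1 q1 * tperm p2 q2 = tperm p3 q3 * tperm p4 q4 ->
  (tperm p3 q3 = tperm p2 q2 /\ tperm p4 q4 = tperm p1 q1) \/
  exists x y z, [/\ (x < y)%N, (y < z)%N &
                    all (mem [:: x; y; z]) [:: p1; q1; p2; q2; p3; q3; p4; q4]].
Proof.
move=> lt1 lt2 lt3 lt4 ne12 ne13 eq_mul.
have neq p q : (p < q)%N -> p != q by move=> lt; rewrite neq_ltn lt.
have [overlap|disj] := boolP [|| p1 == p2, p1 == q2, q1 == p2 | q1 == q2]; last first.
  by left; apply: tperm_mul_disjoint; rewrite ?neq.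
right; have [x [y [z [xy yz /allP sub12]]]] := tperm_overlap_triple lt1 lt2 ne12 overlap.
exists x, y, z; split=> //; rewrite -[[:: p1, _ & _]]/([:: p1; q1; p2; q2] ++ _).
rewrite all_cat; apply/andP; split; apply/allP => v; first exact: sub12.
by move=> /(tperm_mul_supp (neq _ _ lt3) (neq _ _ lt4) ne12 eq_mul); apply: sub12.
Qed.

Lemma mem3_ltn_cases x y z p q : (x < y)%N -> (y < z)%N -> (p < q)%N ->
  p \in [:: x; y; z] -> q \in [:: x; y; z] ->
  [\/ p = x /\ q = y, p = x /\ q = z | p = y /\ q = z].
Proof.
move=> xy yz pq; rewrite !inE => /or3P[]/eqP eq_p /or3P[]/eqP eq_q; subst p q;
  by [apply: Or31 | apply: Or32 | apply: Or33 | lia].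
Qed.

End ThreeLetters.

Section ReflectionOrder.
Variable n : nat.
Local Notation Sn := {perm 'I_n}.
Implicit Types (p q x y z : 'I_n).
Variable prec : rel Sn.
Hypothesis ro : reflection_order prec.

Lemma refl_order_irr t : t \in refls n -> prec t t = false.
Proof. by case: ro => irr _ _ _ /irr/negbTE. Qed.

Lemma refl_order_asym t t' : t \in refls n -> t' \in refls n ->
  prec t t' -> prec t' t = false.
Proof.
case: ro => _ tr _ _ Rt Rt' lt; apply/negbTE/negP => gt.
by move: (tr _ _ _ Rt Rt' Rt lt gt); rewrite refl_order_irr.
Qed.

Lemma refl_order_three x y z : (x < y)%N -> (y < z)%N ->
  exists b, [/\ prec (tperm x y) (tperm x z) = b, prec (tperm x z) (tperm y z) = b,
                prec (tperm x y) (tperm y z) = b &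
             [/\ prec (tperm x z) (tperm x y) = ~~ b, prec (tperm y z) (tperm x z) = ~~ b
               & prec (tperm y z) (tperm x y) = ~~ b]].
Proof.
move=> xy yz; have xz := ltn_trans xy yz.
have [Rxy Rxz Ryz] := And3 (tperm_refls xy) (tperm_refls xz) (tperm_refls yz).
case: ro => _ tr _ /(_ x y z xy yz) /orP[] /andP[lt1 lt2].
  have lt3 := tr _ _ _ Rxy Rxz Ryz lt1 lt2; exists true.
  by rewrite lt1 lt2 lt3 (refl_order_asym Rxy Rxz lt1) (refl_order_asym Rxz Ryz lt2)
             (refl_order_asym Rxy Ryz lt3).
have lt3 := tr _ _ _ Ryz Rxz Rxy lt1 lt2; exists false.
by rewrite lt1 lt2 lt3 (refl_order_asym Ryz Rxz lt1) (refl_order_asym Rxz Rxy lt2)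
           (refl_order_asym Ryz Rxy lt3).
Qed.

Lemma refl_order_min (T : finType) (A : {set T}) (f : T -> Sn) :
  A != set0 -> {in A &, injective f} -> {in A, forall u, f u \in refls n} ->
  exists2 u, u \in A & forall v, v \in A -> v != u -> prec (f u) (f v).
Proof.
case: ro => _ tr total _ /set0Pn[u0 Au0] f_inj fR.
pose below u := #|[set v in A | prec (f v) (f u)]|.
have [u Au u_min] := arg_minnP below Au0; exists u => // v Av vu.
have fvu : f v != f u by apply: contra vu => /eqP/f_inj->.
have /orP[lt_vu|//] := total _ _ (fR _ Av) (fR _ Au) fvu.
suff : (below v < below u)%N by rewrite ltnNge u_min.
apply: proper_card; apply/properP; split.
  apply/subsetP => w; rewrite !inE => /andP[Aw lt_wv]; rewrite Aw.
  exact: tr _ _ _ (fR _ Aw) (fR _ Av) (fR _ Au) lt_wv lt_vu.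
by exists v; rewrite !inE Av //= refl_order_irr ?fR.
Qed.

Lemma diamond_increasing_three (a : Sn) x y z p1 q1 p2 q2 p3 q3 p4 q4 :
  (x < y)%N -> (y < z)%N ->
  all (mem [:: x; y; z]) [:: p1; q1; p2; q2; p3; q3; p4; q4] ->
  (p1 < q1)%N -> (p2 < q2)%N -> (p3 < q3)%N -> (p4 < q4)%N ->
  (a^-1 p1 < a^-1 q1)%N -> (a^-1 (tperm p1 q1 p2) < a^-1 (tperm p1 q1 q2))%N ->
  (a^-1 p3 < a^-1 q3)%N -> (a^-1 (tperm p3 q3 p4) < a^-1 (tperm p3 q3 q4))%N ->
  tperm p1 q1 != tperm p2 q2 -> tperm p1 q1 != tperm p3 q3 ->
  tperm p1 q1 * tperm p2 q2 = tperm p3 q3 * tperm p4 q4 ->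
  (prec (tperm p1 q1) (tperm p2 q2) || prec (tperm p3 q3) (tperm p4 q4)) &&
  (prec (tperm p1 q1) (tperm p2 q2) ==> prec (tperm p1 q1) (tperm p3 q3)).
Proof.
move=> xy yz /and5P[m1 m2 m3 m4 /and5P[m5 m6 m7 m8 _]] lt1 lt2 lt3 lt4.
move=> pos1 pos2 pos3 pos4 ne12 ne13 eq_mul.
have eval v : val ((tperm p1 q1 * tperm p2 q2) v) = val ((tperm p3 q3 * tperm p4 q4) v).
  by rewrite eq_mul.
have [Ex Ey Ez] := And3 (eval x) (eval y) (eval z).
have [b [pb1 pb2 pb3 [pb4 pb5 pb6]]] := refl_order_three xy yz.
have xz := ltn_trans xy yz.
have [txy txz tyz] : [/\ tperm x y z = z, tperm x z y = y & tperm y z x = x].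
  by split; apply: tpermD; rewrite neq_ltn ?xy ?yz ?xz ?orbT.
have [i1 i2 i3] := And3 (refl_order_irr (tperm_refls xy)) (refl_order_irr (tperm_refls xz))
                        (refl_order_irr (tperm_refls yz)).
(* An exhaustive check over the transpositions of {x, y, z}: impossible configurations
   violate one of the position inequalities or the product identity at x, y or z. *)
case: (mem3_ltn_cases xy yz lt1 m1 m2) => [][? ?]; subst p1 q1;
case: (mem3_ltn_cases xy yz lt3 m5 m6) => [][? ?]; subst p3 q3; rewrite ?eqxx // in ne13;
case: (mem3_ltn_cases xy yz lt2 m3 m4) => [][? ?]; subst p2 q2; rewrite ?eqxx // in ne12;
case: (mem3_ltn_cases xy yz lt4 m7 m8) => [][? ?]; subst p4 q4;
rewrite !permM ?tpermL ?tpermR ?txy ?txz ?tyz in pos2 pos4 Ex Ey Ez;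
rewrite ?pb1 ?pb2 ?pb3 ?pb4 ?pb5 ?pb6 ?i1 ?i2 ?i3;
by [case: b | clear -xy yz pos1 pos2 pos3 pos4 Ex Ey Ez; lia].
Qed.

Lemma diamond_increasing (a b c d : Sn) :
  bedge a b -> bedge b d -> bedge a c -> bedge c d -> b != c ->
  (prec (label a b) (label b d) || prec (label a c) (label c d)) &&
  (prec (label a b) (label b d) ==> prec (label a b) (label a c)).
Proof.
move=> ab bd ac cd bc; have ell_ad := ltn_trans (bedge_ell ab) (bedge_ell bd).
case/bedgeP: ab bd bc => p1 [q1 [lt1 -> pos1]] bd.
case/bedgeP: ac cd => p3 [q3 [lt3 -> pos3]] cd bc.
case/bedgeP: bd => p2 [q2 [lt2 dE12 pos2]]; case/bedgeP: cd => p4 [q4 [lt4 dE34 pos4]].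
rewrite [in label _ d]dE12 [in label (a * tperm p3 q3) d]dE34 !label_mul.
rewrite dE12 in ell_ad.
have eq_mul : tperm p1 q1 * tperm p2 q2 = tperm p3 q3 * tperm p4 q4.
  by apply: (mulgI a); rewrite !mulgA -dE12 -dE34.
have ne12 : tperm p1 q1 != tperm p2 q2.
  by apply: contraTneq ell_ad => <-; rewrite -mulgA tperm2 mulg1 ltnn.
have ne13 : tperm p1 q1 != tperm p3 q3 by apply: contra bc => /eqP->.
rewrite !invM_tperm in pos2 pos4.
have [[-> ->]|[x [y [z [xy yz sub]]]]] := tperm_mul_cases lt1 lt2 lt3 lt4 ne12 ne13 eq_mul.
  by rewrite implybb andbT; case: ro => _ _ total _; apply: total; rewrite ?tperm_refls.
exact: diamond_increasing_three xy yz sub _ _ _ _ pos1 pos2 pos3 pos4 ne12 ne13 eq_mul.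
Qed.

Lemma diamond_increasing_unique (a b c d : Sn) :
  bedge a b -> bedge b d -> bedge a c -> bedge c d -> b != c ->
  prec (label a b) (label b d) = ~~ prec (label a c) (label c d).
Proof.
move=> ab bd ac cd bc.
have /andP[inc_bc inc_b] := diamond_increasing ab bd ac cd bc.
have cb : c != b by rewrite eq_sym.
have /andP[_ inc_c] := diamond_increasing ac cd ab bd cb.
have [Rb Rc] := (label_bedge_refls ab, label_bedge_refls ac).
case: (prec _ (label b d)) inc_bc inc_b => /= [_ lt_bc | -> //].
by move: inc_c; rewrite (refl_order_asym Rb Rc lt_bc) implybF => ->.
Qed.

Lemma diamond_middle_unique (a b c c' d : Sn) :
  bedge a b -> bedge b d -> bedge a c -> bedge c d -> bedge a c' -> bedge c' d ->
  b != c -> b != c' -> c = c'.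
Proof.
move=> ab bd ac cd ac' c'd bc bc'; apply/eqP/negPn/negP => cc'.
(* Three booleans cannot be pairwise complementary. *)
move: (diamond_increasing_unique ab bd ac cd bc) (diamond_increasing_unique ab bd ac' c'd bc').
move: (diamond_increasing_unique ac cd ac' c'd cc').
by case: (prec (label a b) _); case: (prec (label a c) _); case: (prec (label a c') _).
Qed.

End ReflectionOrder.

Section Cube.
Variable n : nat.
Local Notation Sn := {perm 'I_n}.
Variables (th : {set Sn} -> Sn) (Y : {set Sn}) (prec : rel Sn).
Hypothesis ro : reflection_order prec.
Hypothesis th_atom : forall y, y \in Y -> th [set y] = y.
Hypothesis th_edge : forall (S : {set Sn}) y, S \subset Y -> y \in Y -> y \notin S ->
  bedge (th S) (th (y |: S)).
Implicit Types (S R : {set Sn}) (y : Sn) (s : seq Sn).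

Lemma setU1_subset S y : S \subset Y -> y \in Y -> y |: S \subset Y.
Proof. by move=> SY yY; rewrite subUset sub1set yY SY. Qed.

Lemma th_atom_neq S y y' : S \subset Y -> y \in Y -> y' \in Y ->
  y \notin S -> y' \notin S -> y != y' -> th (y |: S) != th (y' |: S).
Proof.
have [k] := ubnP #|S|; elim: k => // k IH in S y y' *; rewrite ltnS => leSk.
move=> SY yY y'Y yS y'S yy'.
have [->|[s sS]] := set_0Vmem S; first by rewrite !setU0 !th_atom.
set R := S :\ s; have SE : S = s |: R by rewrite setD1K.
have ltRk : (#|R| < k)%N by move: leSk; rewrite (cardsD1 s) sS.
have RY : R \subset Y by apply: subset_trans (subD1set S s) SY.
have sY : s \in Y := subsetP SY s sS.
have sR : s \notin R by rewrite !inE eqxx.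
have [yR y'R] : y \notin R /\ y' \notin R by rewrite !inE !negb_and yS y'S !orbT.
have sy : s != y by apply: contraNneq yS => <-.
have sy' : s != y' by apply: contraNneq y'S => <-.
apply/negP => /eqP eq_th; apply: (negP (IH R y y' ltRk RY yY y'Y yR y'R yy')); apply/eqP.
have yRs : s \notin y |: R by rewrite in_setU1 negb_or sy.
have y'Rs : s \notin y' |: R by rewrite in_setU1 negb_or sy'.
(* theta(S), theta(R + y) and theta(R + y') would be three middle vertices between
   theta(R) and theta(S + y). *)
apply: (@diamond_middle_unique _ _ ro _ _ _ _ (th (y |: S)) (th_edge RY sY sR) _
          (th_edge RY yY yR) _ (th_edge RY y'Y y'R)).
- by rewrite -SE; apply: th_edge.
- by rewrite SE setUCA; apply: th_edge; rewrite ?setU1_subset.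
- by rewrite eq_th SE setUCA; apply: th_edge; rewrite ?setU1_subset.
- exact: IH.
- exact: IH.
Qed.

Definition chain_from S s := [seq th (S :|: [set x in take i s]) | i <- iota 1 (size s)].

Definition good_from S s :=
  [/\ uniq s, [set x in s] = Y :\: S & increasing_path prec (th S) (chain_from S s)].

Definition step_label S y := label (th S) (th (y |: S)).

Lemma chain_from_cons S y s : chain_from S (y :: s) = th (y |: S) :: chain_from (y |: S) s.
Proof.
rewrite /chain_from /= take0 -[2]/(1 + 1) iotaDl -map_comp.
congr (th _ :: _); first by apply/setP => x; rewrite !inE orbC.
apply: eq_map => i /=; congr th; apply/setP => x.
by rewrite !inE add0n orbCA orbA.
Qed.

Lemma increasing_path_cons p0 p1 ps : increasing_path prec p0 (p1 :: ps) <->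
  [/\ bedge p0 p1, increasing_path prec p1 ps &
      if ps is p2 :: _ then prec (label p0 p1) (label p1 p2) else true].
Proof.
rewrite /increasing_path /=; case: ps => [|p2 ps] /=.
  by split=> [[/andP[-> _] _]|[-> _ _]].
by split=> [[/andP[-> /andP[-> ->]] /andP[-> ->]]|[-> [/andP[-> ->] ->] ->]].
Qed.

Lemma good_from_consP S y s : S \subset Y ->
  good_from S (y :: s) <->
  [/\ y \in Y :\: S, good_from (y |: S) s &
      if s is z :: _ then prec (step_label S y) (step_label (y |: S) z) else true].
Proof.
move=> SY; have chain_step z s' :
    (if s' is z' :: _ then prec (step_label S z) (step_label (z |: S) z') else true) <->
    (if chain_from (z |: S) s' is p2 :: _ then
       prec (label (th S) (th (z |: S))) (label (th (z |: S)) p2) else true).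
  by case: s' => [|z' s']; rewrite ?chain_from_cons.
rewrite /good_from chain_from_cons; split.
  case=> /andP[yNs s_uniq] sE /increasing_path_cons[_ inc /chain_step step].
  have yA : y \in Y :\: S by rewrite -sE inE mem_head.
  split=> //; split=> //; apply/setP => x; move/setP: sE => /(_ x).
  by rewrite !inE; case: eqVneq => [->|] //=; rewrite (negbTE yNs).
case=> yA [s_uniq sE inc] /chain_step step; move: yA; rewrite inE => /andP[yS yY].
split.
- have : y \notin [set x in s] by rewrite sE !inE eqxx.
  by rewrite inE /= s_uniq andbT.
- apply/setP => x; move/setP/(_ x): sE; rewrite !inE.
  by case: eqVneq => [->|_ ->] //= _; rewrite yS yY.
- by apply/increasing_path_cons; split=> //; apply: th_edge.
Qed.

Lemma th_step_edge S y : S \subset Y -> y \in Y :\: S -> bedge (th S) (th (y |: S)).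
Proof. by move=> SY; rewrite inE => /andP[yS yY]; apply: th_edge. Qed.

Lemma step_label_refls S : S \subset Y -> {in Y :\: S, forall y, step_label S y \in refls n}.
Proof. by move=> SY y yA; apply/label_bedge_refls/th_step_edge. Qed.

Lemma step_label_inj S : S \subset Y -> {in Y :\: S &, injective (step_label S)}.
Proof.
move=> SY y y'; rewrite !inE => /andP[yS yY] /andP[y'S y'Y] /mulgI eq_th.
by apply/eqP/negPn/negP => /(th_atom_neq SY yY y'Y yS y'S); rewrite eq_th eqxx.
Qed.

Lemma step_subset S y : S \subset Y -> y \in Y :\: S -> y |: S \subset Y.
Proof. by move=> SY; rewrite inE => /andP[_ yY]; apply: setU1_subset. Qed.

Lemma step_mem S y y' : y' \in Y :\: S -> y' != y -> y' \in Y :\: (y |: S).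
Proof. by rewrite !inE negb_or => /andP[-> ->] ->. Qed.

Lemma step_card S y : y \in Y :\: S -> (#|Y :\: (y |: S)| < #|Y :\: S|)%N.
Proof.
move=> yA; apply/proper_card/properP; split; first by apply/setDS/subsetUr.
by exists y => //; rewrite !inE eqxx.
Qed.

Lemma cube_face S y y' : S \subset Y -> y \in Y :\: S -> y' \in Y :\: S -> y != y' ->
  [/\ bedge (th S) (th (y |: S)), bedge (th (y |: S)) (th (y' |: (y |: S))),
      bedge (th S) (th (y' |: S)), bedge (th (y' |: S)) (th (y' |: (y |: S))) &
      th (y |: S) != th (y' |: S)].
Proof.
move=> SY yA y'A yy'; have y'y : y' != y by rewrite eq_sym.
split; [exact: th_step_edge | | exact: th_step_edge | |].
- exact: th_step_edge (step_subset SY yA) (step_mem y'A y'y).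
- by rewrite setUCA; apply: th_step_edge (step_subset SY y'A) (step_mem yA yy').
- move: yA y'A; rewrite !inE => /andP[yS yY] /andP[y'S y'Y].
  exact: th_atom_neq.
Qed.

Lemma face_increasing_unique S y y' : S \subset Y -> y \in Y :\: S -> y' \in Y :\: S ->
  y != y' ->
  prec (step_label S y) (step_label (y |: S) y') =
  ~~ prec (step_label S y') (step_label (y' |: S) y).
Proof.
move=> SY yA y'A yy'; have [e1 e2 e3 e4 ne] := cube_face SY yA y'A yy'.
by rewrite /step_label [y |: (y' |: S)]setUCA; apply: diamond_increasing_unique.
Qed.

Lemma face_increasing_first S y y' : S \subset Y -> y \in Y :\: S -> y' \in Y :\: S ->
  y != y' -> prec (step_label S y) (step_label (y |: S) y') ->
  prec (step_label S y) (step_label S y').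
Proof.
move=> SY yA y'A yy'; have [e1 e2 e3 e4 ne] := cube_face SY yA y'A yy'.
by have /andP[_ /implyP] := diamond_increasing ro e1 e2 e3 e4 ne.
Qed.

Lemma good_from_mem S s x : good_from S s -> (x \in s) = (x \in Y :\: S).
Proof. by case=> _ <- _; rewrite inE. Qed.

Lemma good_from_head_min S y1 s1 y : S \subset Y -> good_from S (y1 :: s1) ->
  y \in Y :\: S -> y != y1 -> prec (step_label S y1) (step_label S y).
Proof.
have [k] := ubnP #|Y :\: S|; elim: k => // k IH in S y1 s1 y *; rewrite ltnS => leAk SY.
case/(good_from_consP _ _ SY) => y1A g1 step yA yy1.
have yA1 := step_mem yA yy1.
case: s1 g1 step => [|z s2] g1 step; first by rewrite -(good_from_mem _ g1) in yA1.
apply: (face_increasing_first SY y1A yA); first by rewrite eq_sym.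
have [->//|yz] := eqVneq y z.
have S1Y := step_subset SY y1A.
have zA1 : z \in Y :\: (y1 |: S) by rewrite -(good_from_mem _ g1) mem_head.
case: ro => _ tr _ _; apply: (tr _ _ _ _ _ _ step (IH _ _ _ _ _ S1Y g1 yA1 yz)).
- exact: step_label_refls.
- exact: step_label_refls.
- exact: step_label_refls.
- exact: leq_trans (step_card y1A) leAk.
Qed.

Lemma good_from_exists S : S \subset Y -> exists s, good_from S s.
Proof.
have [k] := ubnP #|Y :\: S|; elim: k => // k IH in S *; rewrite ltnS => leAk SY.
have [A0|An0] := eqVneq (Y :\: S) set0.
  by exists [::]; split=> //; apply/setP => x; rewrite A0 !inE.
have [y yA y_min] := refl_order_min ro An0 (step_label_inj SY) (step_label_refls SY).
have [s1 g1] := IH _ (leq_trans (step_card yA) leAk) (step_subset SY yA).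
exists (y :: s1); apply/(good_from_consP _ _ SY); split=> //.
case: s1 g1 => // z s2 g1.
have zA1 : z \in Y :\: (y |: S) by rewrite -(good_from_mem _ g1) mem_head.
have [zy zA] : z != y /\ z \in Y :\: S.
  by move: zA1; rewrite !inE negb_or => /andP[/andP[-> ->] ->].
have yz : y != z by rewrite eq_sym.
rewrite (face_increasing_unique SY yA zA yz); apply/negP => lt_zy.
have := face_increasing_first SY zA yA zy lt_zy.
by rewrite (refl_order_asym ro (step_label_refls SY yA) (step_label_refls SY zA) (y_min _ zA zy)).
Qed.

Lemma good_from_unique S s s' : S \subset Y -> good_from S s -> good_from S s' -> s = s'.
Proof.
have [k] := ubnP #|Y :\: S|; elim: k => // k IH in S s s' *; rewrite ltnS => leAk SY.
case: s s' => [|y s] [|y' s'] g g' //.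
- by have := good_from_mem y' g'; rewrite -(good_from_mem _ g) mem_head.
- by have := good_from_mem y g; rewrite -(good_from_mem _ g') mem_head.
have yA : y \in Y :\: S by rewrite -(good_from_mem _ g) mem_head.
have y'A : y' \in Y :\: S by rewrite -(good_from_mem _ g') mem_head.
have [eq_yy'|yy'] := eqVneq y y'.
  subst y'; move: g g' => /(good_from_consP _ _ SY)[_ g _] /(good_from_consP _ _ SY)[_ g' _].
  by rewrite (IH _ _ _ (leq_trans (step_card yA) leAk) (step_subset SY yA) g g').
have y'y : y' != y by rewrite eq_sym.
have lt_yy' := good_from_head_min SY g y'A y'y.
have lt_y'y := good_from_head_min SY g' yA yy'.
by move: lt_y'y; rewrite (refl_order_asym ro (step_label_refls SY yA) (step_label_refls SY y'A) lt_yy').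
Qed.

End Cube.

Section Clusters.
Variable n : nat.
Local Notation Sn := {perm 'I_n}.
Variables (u v x : Sn) (I Y : {set Sn}) (theta : {set Sn} -> Sn).
Implicit Types (S : {set Sn}) (y : Sn).
Hypotheses (cluster : strong_cluster u v I x theta) (YA : in_Ax u v I x Y).

Lemma in_Ax_subset S : S \subset Y -> in_Ax u v I x S.
Proof.
case: YA => YY antiY SY; split; first exact: subset_trans SY YY.
by move=> a b aS bS; apply: antiY; apply: (subsetP SY).
Qed.

Lemma cluster_atom y : y \in Y -> theta [set y] = y.
Proof. by case: cluster YA => _ _ hc2 _ _ [YY _] yY; apply/hc2/(subsetP YY). Qed.

Lemma cluster_edge S y : S \subset Y -> y \in Y -> y \notin S ->
  bedge (theta S) (theta (y |: S)).
Proof.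
case: cluster => _ _ _ hc3 _ SY yY yS.
apply: hc3; [exact: in_Ax_subset | exact/in_Ax_subset/setU1_subset | exact: subsetUr |].
suff -> : (y |: S) :\: S = [set y] by rewrite cards1.
by apply/setP => w; rewrite !inE; case: eqVneq => [->|_] /=; rewrite ?andbT ?andNb.
Qed.

End Clusters.

Lemma good_ordering_from_set0 n (theta : {set {perm 'I_n}} -> {perm 'I_n}) Y prec s :
  good_ordering prec theta Y s <-> good_from theta Y prec set0 s.
Proof.
rewrite /good_ordering /good_from setD0.
suff -> : chain_from theta set0 s = theta_chain theta s by [].
by apply: eq_map => i; rewrite set0U.
Qed.

Theorem lemma3p11 (n : nat) (u v z : {perm 'I_n})
    (theta : {perm 'I_n} -> {set {perm 'I_n}} -> {perm 'I_n})
    (prec : rel {perm 'I_n}) :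
  bruhat_le u v ->
  strong_hc_decomposition u v z theta ->
  reflection_order prec ->
  forall x Y, x \in interval u z -> in_Ax u v (interval u z) x Y ->
    exists s, good_ordering prec (theta x) Y s /\
      forall s', good_ordering prec (theta x) Y s' -> s' = s.
Proof.
move=> _ [_ _ clusters] ro x Y xI YA.
have th_atom := cluster_atom (clusters x xI) YA.
have th_edge := cluster_edge (clusters x xI) YA.
have [s gs] := good_from_exists ro th_atom th_edge (sub0set Y).
exists s; split=> [|s' /good_ordering_from_set0 gs']; first exact/good_ordering_from_set0.
exact: (good_from_unique ro th_atom th_edge (sub0set Y) gs' gs).
Qed.
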